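(* Let $\Sigma$ be any set of $\mathscr{L}$-sentences. Define, for every purely modal formula $K\phi$ and every assignment $s$ into $\mathbb{N}$, $K\phi$ to be true at $s$ iff $\Sigma\models\phi^s$. Then this assignment of truth values satisfies the three constraints (a), (b), (c) in the definition of an $\mathscr{L}$-structure; consequently $\mathcal{M}_\Sigma$ (the standard model of arithmetic on $\mathbb{N}$ equipped with this interpretation of $K$) is an $\mathscr{L}$-structure.
   Context: $\mathscr{L}$ is the language of Peano arithmetic (variables, constant $0$, unary $S$, binary $+$, $\cdot$) extended by a unary modal operator $K$: whenever $\phi$ is a formula, $K\phi$ is a formula (called purely modal). Free variables, sentences, substitutability and substitution $\phi(x|t)$ are defined as usual. For a set $U$, an assignment into $U$ maps variables to $U$; $s(x|u)$ agrees with $s$ except mapping $x$ to $u$. An $\mathscr{L}$-structure $\mathcal{M}$ consists of a first-order structure for the arithmetic part together with a function assigning to each assignment $s$ and each purely modal formula $K\phi$ a truth value (written $\mathcal{M}\models K\phi[s]$ or not), subject to: (a) whether $\mathcal{M}\models K\phi[s]$ does not depend on $s(x)$ for $x$ not free in $\phi$; (b) if $\psi$ is an alphabetic variant of $\phi$ (obtained by renaming bound variables respecting binding), then $\mathcal{M}\models K\phi[s]$ iff $\mathcal{M}\models K\psi[s]$; (c) if $y$ is substitutable for $x$ in $\phi$, then $\mathcal{M}\models K\phi(x|y)[s]$ iff $\mathcal{M}\models K\phi[s(x|s(y))]$. Satisfaction $\mathcal{M}\models\phi[s]$ for all formulas is then defined inductively as usual; $\mathcal{M}\models\phi$ means $\mathcal{M}\models\phi[s]$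 for all $s$. For a set $\Sigma$ of sentences, $\Sigma\models\phi$ means every $\mathscr{L}$-structure satisfying every member of $\Sigma$ satisfies $\phi$. For a formula $\phi$ and an assignment $s$ into $\mathbb{N}$, $\phi^s$ is the sentence obtained by replacing each free variable $x$ of $\phi$ by the numeral $\overline{s(x)}$ (i.e. $S(S(\cdots S(0)))$ with $s(x)$ occurrences of $S$). *)

From Stdlib Require Import Arith List.

Inductive term : Type :=
| Var  : nat -> term
| Zero : term
| Succ : term -> term
| Plus : term -> term -> term
| Mult : term -> term -> term.

Inductive formula : Type :=
| Eq  : term -> term -> formula
| Neg : formula -> formula
| Imp : formula -> formula -> formula
| All : nat -> formula -> formula
| K   : formula -> formula.

Fixpoint occurs (x : nat) (t : term) : Prop :=
  match t with
  | Var y => x = y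
  | Zero => False
  | Succ t1 => occurs x t1
  | Plus t1 t2 | Mult t1 t2 => occurs x t1 \/ occurs x t2
  end.

Fixpoint free (x : nat) (phi : formula) : Prop :=
  match phi with
  | Eq t1 t2 => occurs x t1 \/ occurs x t2
  | Neg p => free x p
  | Imp p q => free x p \/ free x q
  | All y p => x <> y /\ free x p
  | K p => free x p
  end.

Definition sentence (phi : formula) : Prop := forall x, ~ free x phi.

Fixpoint tsubst (x : nat) (u : term) (t : term) : term :=
  match t with
  | Var y => if Nat.eqb x y then u else Var y
  | Zero => Zero
  | Succ t1 => Succ (tsubst x u t1)
  | Plus t1 t2 => Plus (tsubst x u t1) (tsubst x u t2)
  | Mult t1 t2 => Mult (tsubst x u t1) (tsubst x u t2)
  end.

Fixpoint subst (x : nat) (u : term) (phi : formula) : formula :=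
  match phi with
  | Eq t1 t2 => Eq (tsubst x u t1) (tsubst x u t2)
  | Neg p => Neg (subst x u p)
  | Imp p q => Imp (subst x u p) (subst x u q)
  | All y p => if Nat.eqb x y then All y p else All y (subst x u p)
  | K p => K (subst x u p)
  end.

Fixpoint substitutable (u : term) (x : nat) (phi : formula) : Prop :=
  match phi with
  | Eq _ _ => True
  | Neg p => substitutable u x p
  | Imp p q => substitutable u x p /\ substitutable u x q
  | All y p => ~ free x (All y p) \/ (~ occurs y u /\ substitutable u x p)
  | K p => substitutable u x p
  end.

(* Alphabetic variants (alpha-equivalence: renaming of bound variables
   respecting binding), via a list of paired bound variables. *)
Fixpoint var_rel (l : list (nat * nat)) (x y : nat) : Prop :=
  match l with
  | nil => x = y
  | (a, b) :: l' => (x = a /\ y = b) \/ (x <> a /\ y <> b /\ var_rel l' x y)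
  end.

Fixpoint term_rel (l : list (nat * nat)) (t1 t2 : term) : Prop :=
  match t1, t2 with
  | Var x, Var y => var_rel l x y
  | Zero, Zero => True
  | Succ a, Succ b => term_rel l a b
  | Plus a1 a2, Plus b1 b2 => term_rel l a1 b1 /\ term_rel l a2 b2
  | Mult a1 a2, Mult b1 b2 => term_rel l a1 b1 /\ term_rel l a2 b2
  | _, _ => False
  end.

Fixpoint alpha_rel (l : list (nat * nat)) (phi psi : formula) : Prop :=
  match phi, psi with
  | Eq a1 a2, Eq b1 b2 => term_rel l a1 b1 /\ term_rel l a2 b2
  | Neg p, Neg q => alpha_rel l p q
  | Imp p1 p2, Imp q1 q2 => alpha_rel l p1 q1 /\ alpha_rel l p2 q2
  | All x p, All y q => alpha_rel ((x, y) :: l) p q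
  | K p, K q => alpha_rel l p q
  | _, _ => False
  end.

Definition alpha_variant (phi psi : formula) : Prop := alpha_rel nil phi psi.

(* Pre-structures: an arithmetic first-order structure together with an
   arbitrary truth value for each purely modal formula K phi at each
   assignment s ; Kint s phi means  M |= K phi [s]. *)
Record prestructure : Type := {
  carrier : Type;
  zero : carrier;
  succ : carrier -> carrier;
  plus : carrier -> carrier -> carrier;
  mult : carrier -> carrier -> carrier;
  Kint : (nat -> carrier) -> formula -> Prop
}.

Definition upd {U : Type} (s : nat -> U) (x : nat) (u : U) : nat -> U :=
  fun y => if Nat.eqb y x then u else s y.

Fixpoint eval (M : prestructure) (s : nat -> carrier M) (t : term) : carrier M :=
  match t with
  | Var x => s x
  | Zero => zero M
  | Succ t1 => succ M (eval M s t1)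
  | Plus t1 t2 => plus M (eval M s t1) (eval M s t2)
  | Mult t1 t2 => mult M (eval M s t1) (eval M s t2)
  end.

Definition constraint_a (M : prestructure) : Prop :=
  forall (phi : formula) (s s' : nat -> carrier M),
    (forall x, free x phi -> s x = s' x) -> (Kint M s phi <-> Kint M s' phi).

Definition constraint_b (M : prestructure) : Prop :=
  forall (phi psi : formula) (s : nat -> carrier M),
    alpha_variant phi psi -> (Kint M s phi <-> Kint M s psi).

Definition constraint_c (M : prestructure) : Prop :=
  forall (phi : formula) (x y : nat) (s : nat -> carrier M),
    substitutable (Var y) x phi ->
    (Kint M s (subst x (Var y) phi) <-> Kint M (upd s x (s y)) phi).

Definition is_structure (M : prestructure) : Prop :=
  constraint_a M /\ constraint_b M /\ constraint_c M.

Fixpoint sat (M : prestructure) (s : nat -> carrier M) (phi : formula) : Prop :=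
  match phi with
  | Eq t1 t2 => eval M s t1 = eval M s t2
  | Neg p => ~ sat M s p
  | Imp p q => sat M s p -> sat M s q
  | All x p => forall u : carrier M, sat M (upd s x u) p
  | K p => Kint M s p
  end.

Definition models (M : prestructure) (phi : formula) : Prop :=
  forall s : nat -> carrier M, sat M s phi.

Definition entails (Sigma : formula -> Prop) (phi : formula) : Prop :=
  forall M : prestructure, is_structure M ->
    (forall sigma, Sigma sigma -> models M sigma) -> models M phi.

Fixpoint numeral (n : nat) : term :=
  match n with
  | O => Zero
  | S m => Succ (numeral m)
  end.

Fixpoint tssubst (rho : nat -> term) (t : term) : term :=
  match t with
  | Var y => rho y
  | Zero => Zero
  | Succ t1 => Succ (tssubst rho t1)
  | Plus t1 t2 => Plus (tssubst rho t1) (tssubst rho t2)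
  | Mult t1 t2 => Mult (tssubst rho t1) (tssubst rho t2)
  end.

Fixpoint ssubst (rho : nat -> term) (phi : formula) : formula :=
  match phi with
  | Eq t1 t2 => Eq (tssubst rho t1) (tssubst rho t2)
  | Neg p => Neg (ssubst rho p)
  | Imp p q => Imp (ssubst rho p) (ssubst rho q)
  | All x p => All x (ssubst (fun y => if Nat.eqb y x then Var y else rho y) p)
  | K p => K (ssubst rho p)
  end.

(* phi^s : each free variable x replaced by the numeral of s(x) *)
Definition close (phi : formula) (s : nat -> nat) : formula :=
  ssubst (fun x => numeral (s x)) phi.

Definition M_Sigma (Sigma : formula -> Prop) : prestructure := {|
  carrier := nat;
  zero := 0;
  succ := S;
  plus := Nat.add;
  mult := Nat.mul;
  Kint := fun s phi => entails Sigma (close phi s)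
|}.

(* Closing a formula by numerals depends only on the values at its free variables, which
   gives (a), and commutes with substitution of a substitutable variable, which gives (c).
   For (b), closing both alphabetic variants yields alphabetic variants again, and
   alphabetic variants are equivalent in every L-structure: by induction on the size,
   two corresponding quantifiers [All x p] and [All y q] are renamed to a common fresh
   variable [z], leaving smaller alphabetic variants [p(x|z)] and [q(y|z)]; at [K] the
   equivalence is constraint (b) of the structure itself. *)
From Stdlib Require Import Arith List Lia.
Import ListNotations.

Fixpoint term_max_var (t : term) : nat :=
  match t with
  | Var v => v
  | Zero => 0
  | Succ a => term_max_var a
  | Plus a b | Mult a b => max (term_max_var a) (term_max_var b)
  end.

Fixpoint max_var (phi : formula) : nat :=
  match phi with
  | Eq a b => max (term_max_var a) (term_max_var b)
  | Neg p | K p => max_var p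
  | Imp p q => max (max_var p) (max_var q)
  | All y p => max y (max_var p)
  end.

Fixpoint fresh (z : nat) (phi : formula) : Prop :=
  match phi with
  | Eq a b => ~ occurs z a /\ ~ occurs z b
  | Neg p | K p => fresh z p
  | Imp p q => fresh z p /\ fresh z q
  | All y p => y <> z /\ fresh z p
  end.

Fixpoint fsize (phi : formula) : nat :=
  match phi with
  | Eq _ _ => 0
  | Neg p | All _ p | K p => S (fsize p)
  | Imp p q => S (fsize p + fsize q)
  end.

Lemma not_occurs_gt_term_max_var t z : term_max_var t < z -> ~ occurs z t.
Proof.
  induction t; simpl; intros Hz; try tauto.
  - lia.
  - intros [H | H]; [apply IHt1 | apply IHt2]; auto; lia.
  - intros [H | H]; [apply IHt1 | apply IHt2]; auto; lia.
Qed.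

Lemma fresh_gt_max_var phi z : max_var phi < z -> fresh z phi.
Proof.
  induction phi; simpl; intros Hz; repeat split;
    try (apply not_occurs_gt_term_max_var; lia);
    try (apply IHphi; lia); try (apply IHphi1; lia); try (apply IHphi2; lia); lia.
Qed.

Lemma fresh_not_free z phi : fresh z phi -> ~ free z phi.
Proof. induction phi; simpl; tauto. Qed.

Lemma fresh_substitutable z x phi : fresh z phi -> substitutable (Var z) x phi.
Proof. induction phi; simpl; tauto. Qed.

Lemma tsubst_not_occurs x u t : ~ occurs x t -> tsubst x u t = t.
Proof.
  induction t; simpl; intros H; f_equal; try tauto.
  destruct (Nat.eqb_spec x n); tauto.
Qed.

Lemma subst_not_free x u phi : ~ free x phi -> subst x u phi = phi.
Proof.
  induction phi; simpl; intros H; try (f_equal; tauto).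
  - rewrite !tsubst_not_occurs by tauto; reflexivity.
  - destruct (Nat.eqb_spec x n); [reflexivity | rewrite IHphi; tauto].
Qed.

Lemma fsize_subst x u phi : fsize (subst x u phi) = fsize phi.
Proof. induction phi; simpl; auto. destruct (x =? n); simpl; auto. Qed.

Lemma tssubst_ext t r r' :
  (forall x, occurs x t -> r x = r' x) -> tssubst r t = tssubst r' t.
Proof. induction t; simpl; intros H; f_equal; auto. Qed.

Lemma ssubst_ext phi : forall r r',
  (forall x, free x phi -> r x = r' x) -> ssubst r phi = ssubst r' phi.
Proof.
  induction phi; simpl; intros r r' H; f_equal; auto using tssubst_ext.
  apply IHphi; intros v Hv; destruct (Nat.eqb_spec v n); auto.
Qed.

Lemma tssubst_tsubst x y r r' t :
  r' x = r y -> (forall v, v <> x -> occurs v t -> r' v = r v) ->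
  tssubst r (tsubst x (Var y) t) = tssubst r' t.
Proof.
  induction t; simpl; intros Hx Hv; f_equal; auto.
  destruct (Nat.eqb_spec x n); subst; auto.
  symmetry; auto.
Qed.

Lemma ssubst_subst phi : forall x y r r',
  substitutable (Var y) x phi -> r' x = r y ->
  (forall v, v <> x -> free v phi -> r' v = r v) ->
  ssubst r (subst x (Var y) phi) = ssubst r' phi.
Proof.
  induction phi as [t1 t2 | p IHp | p IHp q IHq | n p IHp | p IHp];
    simpl; intros x y r r' Hs Hx Hv.
  - f_equal; apply tssubst_tsubst; auto.
  - f_equal; eauto.
  - f_equal; [eapply IHp | eapply IHq]; eauto; tauto.
  - destruct (Nat.eqb_spec x n) as [<- | Hxn]; simpl; f_equal.
    + apply ssubst_ext; intros v Hfv.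
      destruct (Nat.eqb_spec v x); auto.
      symmetry; auto.
    + destruct Hs as [Hnf | [Hyn Hs]].
      * rewrite subst_not_free by tauto.
        apply ssubst_ext; intros v Hfv.
        destruct (Nat.eqb_spec v n); auto.
        symmetry; apply Hv; auto; intros ->; tauto.
      * apply IHp; auto.
        -- apply Nat.eqb_neq in Hxn; rewrite Hxn.
           simpl in Hyn; destruct (Nat.eqb_spec y n); congruence.
        -- intros v Hvx Hfv; destruct (Nat.eqb_spec v n); auto.
  - f_equal; eauto.
Qed.

Definition in_fst (x : nat) (m : list (nat * nat)) : bool :=
  existsb (fun c => x =? fst c) m.
Definition in_snd (y : nat) (m : list (nat * nat)) : bool :=
  existsb (fun c => y =? snd c) m.
Definition avoids (z : nat) (m : list (nat * nat)) : Prop :=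
  forall c d, In (c, d) m -> c <> z /\ d <> z.

Lemma avoids_cons z c d m : c <> z -> d <> z -> avoids z m -> avoids z ((c, d) :: m).
Proof. intros Hc Hd Hm c' d' [E | Hi]; [injection E as <- <-; auto | auto]. Qed.

(* Renaming the outermost bound pair [(x, y)] to [(z, z)]; [in_fst x m] tells whether
   an inner binder shadows [x], in which case [subst] has already stopped. *)
Lemma var_rel_rename x y z m : forall a b,
  var_rel (m ++ [(x, y)]) a b -> a <> z -> b <> z -> avoids z m ->
  var_rel (m ++ [(z, z)]) (if in_fst x m then a else if x =? a then z else a)
                          (if in_snd y m then b else if y =? b then z else b).
Proof.
  induction m as [| [c d] m IH]; simpl; intros a b H Ha Hb Hm.
  - destruct H as [[-> ->] | [Hxa [Hyb ->]]].
    + rewrite !Nat.eqb_refl; auto.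
    + destruct (Nat.eqb_spec x b), (Nat.eqb_spec y b); try congruence; right; auto.
  - assert (Hc : c <> z /\ d <> z) by (apply Hm; left; auto).
    assert (Hm' : avoids z m) by (intros c' d' Hi; apply Hm; right; auto).
    destruct H as [[-> ->] | [Hac [Hbd H]]].
    + left.
      destruct (Nat.eqb_spec x c), (Nat.eqb_spec y d); simpl;
        destruct (in_fst x m), (in_snd y m); auto;
        destruct (Nat.eqb_spec x c), (Nat.eqb_spec y d); try congruence; auto.
    + right. specialize (IH a b H Ha Hb Hm').
      destruct (Nat.eqb_spec x c), (Nat.eqb_spec y d); simpl;
        destruct (in_fst x m), (in_snd y m) in *;
        destruct (Nat.eqb_spec x a), (Nat.eqb_spec y b) in *; try congruence;
        repeat split; try congruence; intuition.
Qed.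

Lemma term_rel_rename x y z m : forall t1 t2,
  term_rel (m ++ [(x, y)]) t1 t2 -> ~ occurs z t1 -> ~ occurs z t2 -> avoids z m ->
  term_rel (m ++ [(z, z)]) (if in_fst x m then t1 else tsubst x (Var z) t1)
                           (if in_snd y m then t2 else tsubst y (Var z) t2).
Proof.
  induction t1 as [a | | t1 IH1 | t1 IH1 t1' IH1' | t1 IH1 t1' IH1'];
    destruct t2 as [b | | t2 | t2 t2' | t2 t2']; simpl; intros H Hz1 Hz2 Hm;
    try contradiction;
    try (destruct (in_fst x m), (in_snd y m); simpl; auto; fail).
  - pose proof (var_rel_rename x y z m a b H (fun e => Hz1 (eq_sym e))
                  (fun e => Hz2 (eq_sym e)) Hm).
    destruct (in_fst x m), (in_snd y m); simpl in *; auto;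
      destruct (x =? a), (y =? b); simpl; auto.
  - destruct H; specialize (IH1 t2); specialize (IH1' t2').
    destruct (in_fst x m), (in_snd y m); simpl in *; split; tauto.
  - destruct H; specialize (IH1 t2); specialize (IH1' t2').
    destruct (in_fst x m), (in_snd y m); simpl in *; split; tauto.
Qed.

Lemma alpha_rel_rename x y z p : forall q m,
  alpha_rel (m ++ [(x, y)]) p q -> fresh z p -> fresh z q -> avoids z m ->
  alpha_rel (m ++ [(z, z)]) (if in_fst x m then p else subst x (Var z) p)
                            (if in_snd y m then q else subst y (Var z) q).
Proof.
  induction p as [s1 s2 | p IHp | p1 IHp1 p2 IHp2 | n p IHp | p IHp];
    destruct q as [t1 t2 | q | q1 q2 | n' q | q]; simpl; intros m H Hzp Hzq Hm;
    try contradiction;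
    try (destruct (in_fst x m), (in_snd y m); simpl; auto; fail).
  - destruct H as [H1 H2].
    pose proof (term_rel_rename x y z m s1 t1 H1) as T1.
    pose proof (term_rel_rename x y z m s2 t2 H2) as T2.
    destruct (in_fst x m), (in_snd y m); simpl in *; split; tauto.
  - specialize (IHp q m H Hzp Hzq Hm).
    destruct (in_fst x m), (in_snd y m); simpl in *; auto.
  - destruct H; specialize (IHp1 q1 m); specialize (IHp2 q2 m).
    destruct (in_fst x m), (in_snd y m); simpl in *; split; tauto.
  - destruct Hzp as [Hn Hzp], Hzq as [Hn' Hzq].
    specialize (IHp q ((n, n') :: m) H Hzp Hzq (avoids_cons z n n' m Hn Hn' Hm)).
    unfold in_fst, in_snd in *; simpl in IHp.
    destruct (existsb (fun c => x =? fst c) m), (existsb (fun c => y =? snd c) m);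
      destruct (Nat.eqb_spec x n), (Nat.eqb_spec y n'); simpl in *; auto.
  - specialize (IHp q m H Hzp Hzq Hm).
    destruct (in_fst x m), (in_snd y m); simpl in *; auto.
Qed.

Lemma term_rel_weaken l1 l2 t1 t2 :
  (forall a b, var_rel l1 a b -> var_rel l2 a b) ->
  term_rel l1 t1 t2 -> term_rel l2 t1 t2.
Proof.
  intros Hl; revert t2; induction t1; destruct t2; simpl; intros H;
    try contradiction; intuition.
Qed.

Lemma alpha_rel_weaken p : forall q l1 l2,
  (forall a b, var_rel l1 a b -> var_rel l2 a b) ->
  alpha_rel l1 p q -> alpha_rel l2 p q.
Proof.
  induction p; destruct q; simpl; intros l1 l2 Hl H; try contradiction;
    intuition eauto using term_rel_weaken.
  eapply IHp; [| exact H]; simpl; intros a b [E | [? [? E]]]; auto.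
Qed.

Lemma term_rel_nil t1 : forall t2, term_rel nil t1 t2 -> t1 = t2.
Proof.
  induction t1; destruct t2; simpl; intros H; try contradiction; f_equal; intuition.
Qed.

Lemma alpha_variant_rename x y z p q :
  alpha_rel [(x, y)] p q -> fresh z p -> fresh z q ->
  alpha_variant (subst x (Var z) p) (subst y (Var z) q).
Proof.
  intros H Hzp Hzq.
  assert (Hm : avoids z nil) by (intros c d []).
  pose proof (alpha_rel_rename x y z p q nil H Hzp Hzq Hm) as HR; simpl in HR.
  eapply alpha_rel_weaken; [| exact HR].
  simpl; intros a b [[-> ->] | [_ [_ E]]]; auto.
Qed.

Section Semantics.

Variable M : prestructure.
Hypothesis M_a : constraint_a M.
Hypothesis M_b : constraint_b M.
Hypothesis M_c : constraint_c M.

Lemma eval_ext s s' t :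
  (forall x, occurs x t -> s x = s' x) -> eval M s t = eval M s' t.
Proof. induction t; simpl; intros H; f_equal; auto. Qed.

Lemma sat_free_ext phi : forall s s',
  (forall x, free x phi -> s x = s' x) -> (sat M s phi <-> sat M s' phi).
Proof.
  induction phi as [t1 t2 | p IHp | p IHp q IHq | n p IHp | p IHp];
    simpl; intros s s' H.
  - rewrite (eval_ext s s' t1), (eval_ext s s' t2); auto; tauto.
  - rewrite (IHp s s'); auto; tauto.
  - rewrite (IHp s s'), (IHq s s'); auto; tauto.
  - assert (Hupd : forall u v, free v p -> upd s n u v = upd s' n u v).
    { intros u v Hv; unfold upd; destruct (Nat.eqb_spec v n); auto. }
    split; intros Hu u; specialize (Hu u); revert Hu; apply IHp;
      [intros v Hv; symmetry |]; auto.
  - apply M_a; auto.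
Qed.

Lemma sat_ext phi s s' : (forall x, s x = s' x) -> (sat M s phi <-> sat M s' phi).
Proof. intros H; apply sat_free_ext; auto. Qed.

Lemma eval_tsubst s x y t :
  eval M s (tsubst x (Var y) t) = eval M (upd s x (s y)) t.
Proof.
  induction t; simpl; try congruence.
  unfold upd; rewrite Nat.eqb_sym; destruct (n =? x); auto.
Qed.

Lemma sat_subst phi : forall s x y, substitutable (Var y) x phi ->
  (sat M s (subst x (Var y) phi) <-> sat M (upd s x (s y)) phi).
Proof.
  induction phi as [t1 t2 | p IHp | p IHp q IHq | n p IHp | p IHp];
    simpl; intros s x y Hs.
  - rewrite !eval_tsubst; tauto.
  - rewrite IHp; auto; tauto.
  - rewrite IHp, IHq; tauto.
  - destruct (Nat.eqb_spec x n) as [<- | Hxn]; simpl.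
    + split; intros Hu u; specialize (Hu u); revert Hu; apply sat_ext;
        intro v; unfold upd; destruct (v =? x); auto.
    + destruct Hs as [Hnf | [Hyn Hs]].
      * rewrite subst_not_free by tauto.
        split; intros Hu u; specialize (Hu u); revert Hu; apply sat_free_ext;
          intros v Hv; unfold upd; destruct (Nat.eqb_spec v n); auto;
          destruct (Nat.eqb_spec v x); subst; tauto.
      * simpl in Hyn.
        split; intros Hu u; specialize (Hu u); [rewrite IHp in Hu | rewrite IHp]; auto;
          revert Hu; apply sat_ext; intro v; unfold upd;
          destruct (Nat.eqb_spec y n), (Nat.eqb_spec v n), (Nat.eqb_spec v x);
          subst; congruence.
  - apply M_c; auto.
Qed.

Lemma sat_rename_fresh phi s x z u : fresh z phi ->
  (sat M (upd s x u) phi <-> sat M (upd s z u) (subst x (Var z) phi)).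
Proof.
  intros Hz.
  rewrite sat_subst by auto using fresh_substitutable.
  apply sat_free_ext; intros v Hv; unfold upd.
  assert (v <> z) by (intros ->; exact (fresh_not_free _ _ Hz Hv)).
  rewrite Nat.eqb_refl.
  destruct (Nat.eqb_spec v x), (Nat.eqb_spec v z); congruence.
Qed.


Lemma sat_alpha_fsize n : forall phi psi s, fsize phi <= n ->
  alpha_variant phi psi -> (sat M s phi <-> sat M s psi).
Proof.
  unfold alpha_variant.
  induction n; intros phi psi s Hn H;
    destruct phi as [t1 t2 | p | p1 p2 | x p | p];
    destruct psi as [t1' t2' | q | q1 q2 | y q | q];
    simpl in *; try contradiction; try lia.
  1, 2: destruct H as [E1 E2]; apply term_rel_nil in E1, E2; subst; tauto.
  - rewrite (IHn p q s); tauto || lia.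
  - destruct H; rewrite (IHn p1 q1 s), (IHn p2 q2 s); tauto || lia.
  - set (z := S (max (max_var p) (max_var q))).
    assert (Hzp : fresh z p) by (apply fresh_gt_max_var; unfold z; lia).
    assert (Hzq : fresh z q) by (apply fresh_gt_max_var; unfold z; lia).
    assert (Hn' : fsize (subst x (Var z) p) <= n) by (rewrite fsize_subst; lia).
    pose proof (alpha_variant_rename x y z p q H Hzp Hzq) as Ha.
    split; intros Hu u; specialize (Hu u).
    + rewrite sat_rename_fresh with (z := z) in Hu |- * by assumption.
      apply (IHn _ _ _ Hn' Ha); auto.
    + rewrite sat_rename_fresh with (z := z) in Hu |- * by assumption.
      apply (IHn _ _ _ Hn' Ha); auto.
  - apply M_b; auto.
Qed.

Lemma sat_alpha phi psi s : alpha_variant phi psi -> (sat M s phi <-> sat M s psi).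
Proof. apply (sat_alpha_fsize (fsize phi)); auto. Qed.

End Semantics.

(* The invariant met by the substitutions [close] passes under binders: bound variables
   are kept, the others go to equal numerals. *)
Definition ssubst_compatible (l : list (nat * nat)) (r1 r2 : nat -> term) : Prop :=
  forall a b, var_rel l a b ->
    (r1 a = Var a /\ r2 b = Var b) \/ (exists n, r1 a = numeral n /\ r2 b = numeral n).

Lemma term_rel_numeral l n : term_rel l (numeral n) (numeral n).
Proof. induction n; simpl; auto. Qed.

Lemma term_rel_tssubst l r1 r2 t1 : forall t2,
  ssubst_compatible l r1 r2 -> term_rel l t1 t2 ->
  term_rel l (tssubst r1 t1) (tssubst r2 t2).
Proof.
  induction t1 as [a | | | |]; destruct t2 as [b | | | |]; simpl; intros Hr H;
    try contradiction; intuition.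
  destruct (Hr a b H) as [[-> ->] | [k [-> ->]]]; simpl; auto using term_rel_numeral.
Qed.

Lemma alpha_rel_ssubst p : forall q l r1 r2,
  ssubst_compatible l r1 r2 -> alpha_rel l p q ->
  alpha_rel l (ssubst r1 p) (ssubst r2 q).
Proof.
  induction p; destruct q; simpl; intros l r1 r2 Hr H; try contradiction;
    intuition auto using term_rel_tssubst.
  apply IHp; auto.
  intros a b [[-> ->] | [Ha [Hb E]]].
  - left; rewrite !Nat.eqb_refl; auto.
  - apply Nat.eqb_neq in Ha, Hb; rewrite Ha, Hb; auto.
Qed.

Lemma alpha_variant_close phi psi s :
  alpha_variant phi psi -> alpha_variant (close phi s) (close psi s).
Proof.
  intros H; apply alpha_rel_ssubst; auto.
  intros a b E; simpl in E; subst; right; eauto.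
Qed.

Lemma close_free_ext phi s s' :
  (forall x, free x phi -> s x = s' x) -> close phi s = close phi s'.
Proof. intros H; apply ssubst_ext; intros x Hx; rewrite H; auto. Qed.

Lemma close_subst phi x y s : substitutable (Var y) x phi ->
  close (subst x (Var y) phi) s = close phi (upd s x (s y)).
Proof.
  intros Hs; apply ssubst_subst; auto.
  - unfold upd; rewrite Nat.eqb_refl; reflexivity.
  - intros v Hv _; unfold upd; apply Nat.eqb_neq in Hv; rewrite Hv; reflexivity.
Qed.

Lemma entails_alpha Sigma phi psi :
  alpha_variant phi psi -> (entails Sigma phi <-> entails Sigma psi).
Proof.
  intros H; unfold entails, models.
  split; intros He N HN HS s; pose proof HN as (Na & Nb & Nc);
    [apply (sat_alpha N Na Nb Nc phi psi s H) | apply (sat_alpha N Na Nb Nc phi psi s H)];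
    apply He; auto.
Qed.

Theorem lemma8 (Sigma : formula -> Prop)
  (HSigma : forall sigma, Sigma sigma -> sentence sigma) :
  constraint_a (M_Sigma Sigma) /\ constraint_b (M_Sigma Sigma) /\
  constraint_c (M_Sigma Sigma) /\ is_structure (M_Sigma Sigma).
Proof.
  assert (Ca : constraint_a (M_Sigma Sigma)).
  { intros phi s s' H; simpl; rewrite (close_free_ext phi s s' H); tauto. }
  assert (Cb : constraint_b (M_Sigma Sigma)).
  { intros phi psi s H; apply entails_alpha, alpha_variant_close, H. }
  assert (Cc : constraint_c (M_Sigma Sigma)).
  { intros phi x y s H; simpl; rewrite close_subst by exact H; tauto. }
  unfold is_structure; tauto.
Qed.
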